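(* Define, for $x\in\mathcal N$, $$f(x)=\mathbb{E}_x[V(x-D+\xi)]-\mathbb{E}_x[V(x-D)] = \sum_{d=0}^x\tbinom{x}{d}\big(\tfrac qx\big)^d\big(1-\tfrac qx\big)^{x-d}\,p\,\big(V(x+1-d)-V(x-d)\big).$$ Then $f(x+1)-f(x)\ge0$ for all $x\in\mathcal N$, i.e. $f$ is nondecreasing.
   Context: Single-server problem: Bernoulli($p$) arrivals $\xi$, departures $D\sim\mathrm{Binomial}(x,q/x)$ given state $x\ge1$ (no departures at $x=0$), queue $X_{t+1}=X_t-D_{t+1}+\nu_t\xi_{t+1}$, $\nu\in\{0,1\}$; $C>0$, $1>q>2p>0$, $\lambda\in\mathbb R$, cost $c(x,\nu)=Cx+(1-\nu)\lambda$. $V$ is the average-cost relative value function solving $V(x)=Cx-\beta+\min\big(\mathbb{E}_x[pV(x-D+1)+(1-p)V(x-D)],\ \lambda+\mathbb{E}_x[V(x-D)]\big)$, $V(0)=0$; $V$ is nondecreasing and has increasing differences ($V(x+z)-V(x)\ge V(y+z)-V(y)$ for $z>0$, $x>y$). *)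

From Stdlib Require Import Reals Lra Lia.
Open Scope R_scope.

(* P(D = d | X = x) for D ~ Binomial(x, q/x).  At x = 0 this gives
   weight 1 on d = 0 (pow _ 0 = 1), i.e. no departures at x = 0. *)
Definition binpmf (q : R) (x d : nat) : R :=
  C x d * (q / INR x) ^ d * (1 - q / INR x) ^ (x - d).

Definition Ex (q : R) (x : nat) (g : nat -> R) : R :=
  sum_f_R0 (fun d => binpmf q x d * g (x - d)%nat) x.

Definition bellman (p q Ccost lam beta : R) (V : nat -> R) : Prop :=
  forall x : nat,
    V x = Ccost * INR x - beta
          + Rmin (Ex q x (fun y => p * V (y + 1)%nat + (1 - p) * V y))
                 (lam + Ex q x V).

Definition fV (p q : R) (V : nat -> R) (x : nat) : R :=
  sum_f_R0 (fun d => binpmf q x d * p * (V (x - d + 1)%nat - V (x - d)%nat)) x.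

From Stdlib Require Import Reals Lra Lia.
Open Scope R_scope.

(* With [Delta k := V (k + 1) - V k], [fV p q V x] is [p] times the mean of
   [Delta (x - D)] for [D ~ Binomial (x, q / x)].  Increasing differences make
   [Delta] nondecreasing, and for a nondecreasing [g] the mean of [g (n - D)],
   [D ~ Binomial (n, a)], increases with [n] (one more trial adds one unit to
   [n - D] unless it succeeds) and decreases with [a] (induction on [n],
   conditioning on the first trial).  Passing from [x] to [x + 1] increases [n] and lowers [a = q / x]. *)

Fixpoint binom (n k : nat) : R :=
  match n, k with
  | O, O => 1
  | O, S _ => 0
  | S _, O => 1
  | S n', S k' => binom n' k' + binom n' (S k')
  end.

Lemma binom_n0 (n : nat) : binom n 0 = 1.
Proof. destruct n; reflexivity. Qed.

Lemma binom_gt (n k : nat) : (n < k)%nat -> binom n k = 0.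
Proof.
  revert k; induction n as [|n IH]; intros [|k] Hk; try lia; simpl; [reflexivity|].
  rewrite !IH by lia. lra.
Qed.

Lemma binom_ge0 (n k : nat) : 0 <= binom n k.
Proof.
  revert k; induction n as [|n IH]; intros [|k]; simpl; try lra.
  pose proof (IH k); pose proof (IH (S k)). lra.
Qed.

Lemma C_n0 (n : nat) : C n 0 = 1.
Proof.
  unfold C. rewrite Nat.sub_0_r. simpl (Factorial.fact 0). rewrite INR_1.
  field. apply INR_fact_neq_0.
Qed.

Lemma C_nn (n : nat) : C n n = 1.
Proof.
  unfold C. rewrite Nat.sub_diag. simpl (Factorial.fact 0). rewrite INR_1.
  field. apply INR_fact_neq_0.
Qed.

Lemma binom_C (n k : nat) : (k <= n)%nat -> binom n k = C n k.
Proof.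
  revert k; induction n as [|n IH]; intros [|k] Hk.
  - now rewrite C_n0.
  - lia.
  - now rewrite C_n0.
  - simpl. destruct (Nat.eq_dec k n) as [->|Hne].
    + rewrite (binom_gt n (S n)), IH, !C_nn by lia. lra.
    + rewrite !IH by lia. apply pascal. lia.
Qed.

Definition binomial_mean (n : nat) (a : R) (g : nat -> R) : R :=
  sum_f_R0 (fun d => binom n d * a ^ d * (1 - a) ^ (n - d) * g (n - d)%nat) n.

Lemma binomial_mean_0 (a : R) (g : nat -> R) : binomial_mean 0 a g = g 0%nat.
Proof. unfold binomial_mean. simpl. ring. Qed.

(* Conditioning on the first of [n + 1] trials. *)
Lemma binomial_mean_S (n : nat) (a : R) (g : nat -> R) :
  binomial_mean (S n) a g
  = (1 - a) * binomial_mean n a (fun k => g (S k)) + a * binomial_mean n a g.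
Proof.
  unfold binomial_mean.
  set (T := fun d => binom n d * a ^ d * (1 - a) ^ (S n - d) * g (S n - d)%nat).
  set (F := fun d => binom n d * a ^ d * (1 - a) ^ (n - d) * g (n - d)%nat).
  assert (Hmiss : sum_f_R0 T n
                  = (1 - a) * sum_f_R0 (fun d => binom n d * a ^ d
                                 * (1 - a) ^ (n - d) * g (S (n - d))) n).
  { rewrite scal_sum. apply sum_eq. intros d Hd. unfold T.
    replace (S n - d)%nat with (S (n - d)) by lia. simpl. ring. }
  assert (Hmiss_reindex : T 0%nat + sum_f_R0 (fun d => binom n (S d) * a ^ S d
                                        * (1 - a) ^ (n - d) * g (n - d)%nat) n
                  = sum_f_R0 T n).
  { replace (sum_f_R0 T n) with (sum_f_R0 T (S n))
      by (simpl; unfold T at 2; rewrite binom_gt by lia; ring).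
    rewrite (decomp_sum T (S n)) by lia. reflexivity. }
  assert (Hhit : sum_f_R0 (fun d => binom n d * a ^ S d * (1 - a) ^ (n - d)
                                    * g (n - d)%nat) n = a * sum_f_R0 F n).
  { rewrite scal_sum. apply sum_eq. intros d Hd. unfold F. simpl. ring. }
  rewrite decomp_sum by lia. simpl pred.
  rewrite (sum_eq _ (fun d => binom n d * a ^ S d * (1 - a) ^ (n - d) * g (n - d)%nat
                    + binom n (S d) * a ^ S d * (1 - a) ^ (n - d) * g (n - d)%nat)).
  2:{ intros d _. simpl binom. replace (S n - S d)%nat with (n - d)%nat by lia. ring. }
  rewrite plus_sum, Hhit.
  assert (HT0 : T 0%nat = (1 - a) ^ S n * g (S n))
    by (unfold T; rewrite binom_n0, Nat.sub_0_r; ring).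
  rewrite <- Hmiss, <- Hmiss_reindex, HT0, binom_n0, Nat.sub_0_r. ring.
Qed.

Lemma binomial_mean_le (n : nat) (a : R) (g h : nat -> R) :
  0 <= a <= 1 -> (forall k, g k <= h k) -> binomial_mean n a g <= binomial_mean n a h.
Proof.
  intros Ha Hgh. apply sum_Rle. intros d _.
  apply Rmult_le_compat_l; [|apply Hgh].
  repeat apply Rmult_le_pos; try apply pow_le; try lra. apply binom_ge0.
Qed.

Lemma binomial_mean_shift (n : nat) (a : R) (g : nat -> R) :
  0 <= a <= 1 -> Un_growing g ->
  binomial_mean n a g <= binomial_mean n a (fun k => g (S k)).
Proof. intros Ha Hg. now apply binomial_mean_le. Qed.

Lemma binomial_mean_le_S (n : nat) (a : R) (g : nat -> R) :
  0 <= a <= 1 -> Un_growing g -> binomial_mean n a g <= binomial_mean (S n) a g.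
Proof.
  intros Ha Hg. rewrite binomial_mean_S.
  pose proof (binomial_mean_shift n a g Ha Hg). nra.
Qed.

Lemma binomial_mean_antitone (n : nat) (a b : R) (g : nat -> R) :
  0 <= a -> a <= b -> b <= 1 -> Un_growing g ->
  binomial_mean n b g <= binomial_mean n a g.
Proof.
  intros Ha Hab Hb. revert g; induction n as [|n IH]; intros g Hg.
  - rewrite !binomial_mean_0. lra.
  - rewrite !binomial_mean_S.
    assert (HgS : Un_growing (fun k => g (S k))) by (intros k; apply Hg).
    pose proof (IH _ HgS). pose proof (IH _ Hg).
    pose proof (binomial_mean_shift n b g ltac:(lra) Hg).
    nra.
Qed.

Lemma binomial_mean_step (x : nat) (q : R) (g : nat -> R) :
  0 <= q <= 1 -> Un_growing g ->
  binomial_mean x (q / INR x) g <= binomial_mean (S x) (q / INR (S x)) g.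
Proof.
  intros Hq Hg. destruct x as [|m].
  - rewrite binomial_mean_0, <- (binomial_mean_0 (q / INR 1) g).
    apply binomial_mean_le_S; [|exact Hg]. simpl INR. unfold Rdiv. rewrite Rinv_1. lra.
  - assert (Hm : 1 <= INR (S m)) by (rewrite S_INR; pose proof (pos_INR m); lra).
    assert (HmS : INR (S m) < INR (S (S m))) by (rewrite (S_INR (S m)); lra).
    assert (Ha0 : 0 <= q / INR (S (S m))) by (apply Rmult_le_pos; [lra | apply Rlt_le, Rinv_0_lt_compat; lra]).
    assert (Hab : q / INR (S (S m)) <= q / INR (S m)).
    { apply Rmult_le_compat_l; [lra|]. apply Rlt_le, Rinv_lt_contravar; nra. }
    assert (Hb1 : q / INR (S m) <= 1).
    { apply (Rmult_le_reg_r (INR (S m))); [lra|].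
      unfold Rdiv. rewrite Rmult_assoc, Rinv_l by lra. lra. }
    eapply Rle_trans; [apply (binomial_mean_antitone (S m) _ _ g Ha0 Hab Hb1 Hg)|].
    apply binomial_mean_le_S; [lra | exact Hg].
Qed.

Lemma fV_binomial_mean (p q : R) (V : nat -> R) (x : nat) :
  fV p q V x = p * binomial_mean x (q / INR x) (fun k => V (k + 1)%nat - V k).
Proof.
  unfold fV, binomial_mean. rewrite scal_sum. apply sum_eq. intros d Hd.
  unfold binpmf. rewrite binom_C by lia. ring.
Qed.

Theorem mainTheorem7 (p q Ccost lam beta : R) (V : nat -> R)
  (hC : 0 < Ccost) (hp : 0 < p) (h2p : 2 * p < q) (hq : q < 1)
  (hbell : bellman p q Ccost lam beta V) (hV0 : V 0%nat = 0)
  (hmono : forall x y : nat, (x <= y)%nat -> V x <= V y)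
  (hincr : forall x y z : nat, (0 < z)%nat -> (y < x)%nat ->
             V (x + z)%nat - V x >= V (y + z)%nat - V y) :
  forall x : nat, fV p q V (x + 1)%nat - fV p q V x >= 0.
Proof.
  intros x.
  set (Delta := fun k : nat => V (k + 1)%nat - V k).
  assert (HDelta : Un_growing Delta).
  { intros k. unfold Delta. pose proof (hincr (S k) k 1%nat ltac:(lia) ltac:(lia)).
    replace (k + 1)%nat with (S k) in * by lia. lra. }
  assert (Hstep := binomial_mean_step x q Delta ltac:(lra) HDelta).
  rewrite !fV_binomial_mean, Nat.add_1_r. fold Delta.
  nra.
Qed.
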